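(* Let $X$ be a compact Hausdorff space. The assignment sending a (semi-continuous) Banach bundle $(E,X,\pi)$ to the family $(E_n)_{n\ge1}$, $E_n=\{f\in E:\|f\|\le n\}$ with the subspace topology, is an equivalence of categories from Banach bundles over $X$ to bundles over $X$ of models of the continuous theory of Banach spaces; its inverse sends $(E_n)_{n\ge1}$ to $E=\bigcup_nE_n$ equipped with the final topology with respect to the inclusions $E_n\hookrightarrow E$.
   Context: A (semi-continuous) Banach bundle over $X$ is a surjection $\pi:E\to X$ of topological spaces such that: (1) each fibre $E_x$ is a Banach space over $\mathbb K\in\{\mathbb R,\mathbb C\}$; (2) $\pi$ is continuous and open; (3) scalar multiplication $\mathbb K\times E\to E$ and addition $E\times_XE\to E$ are continuous ($E\times_XE=\{(f,g):\pi f=\pi g\}$ with subspace topology); (4) the norm $E\to[0,\infty)$ is upper semicontinuous ($\{f:\|f\|<r\}$ open for all $r$); (5) for each $x\in X$ the sets $\coprod_{y\in U}B(0_y,r)$, $r>0$, $U$ open neighbourhood of $x$, form a neighbourhood basis of $0_x$. Morphisms: continuous maps over $X$ which are linear contractions on each fibre. Bundle of complete metric spaces bounded by $k$: surjection $\pi:E\to X$ with complete metric fibres (distances $\le k$), upper semicontinuous global distance on $E\times_XE$, continuous open $\pi$, and for every open $W$ and $f\in W$ an open $V\ni f$ and $\epsilon>0$ with $V\subseteq V_\epsilon\subseteq W$ ($V_\epsilon=\{g:\exists h\in V,\pi g=\pi h,d(g,h)<\epsilon\}$). A bundle of models of the continuous theory of Banach spaces over $X$ is a family $(E_n)_{n\ge1}$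 where $E_n$ is such a bundle (bound $2n$), together with Banach spaces $B_x$ ($x\in X$) such that the fibre $(E_n)_x$ is the closed ball of radius $n$ of $B_x$ with the norm metric, and such that the following global maps are continuous: the inclusions $E_n\to E_m$ ($n<m$), addition $E_n\times_XE_m\to E_{n+m}$, multiplication by each scalar $\lambda$ as a map $E_n\to E_{\lceil|\lambda|n\rceil}$, and the zero section $X\to E_1$. Morphisms: families of bundle morphisms $E_n\to E'_n$ which on each fibre are restrictions of a single linear contraction $B_x\to B'_x$. *)

From HB Require Import structures.
From mathcomp Require Import all_boot all_order all_algebra.
From mathcomp Require Import all_classical all_reals all_analysis.
From mathcomp.real_closed Require Import complex.
Import Order.TTheory GRing.Theory Num.Theory.
Import numFieldNormedType.Exports.

Set Implicit Arguments.
Unset Strict Implicit.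
Unset Printing Implicit Defensive.

Local Open Scope classical_set_scope.
Local Open Scope ring_scope.

Definition scalars (R : realType) (iscomplex : bool) : numFieldType :=
  if iscomplex then (R[i] : numFieldType) else (R : numFieldType).

Section Topo.

Definition is_topology {A : Type} (S : set A) (tau : set (set A)) : Prop :=
  [/\ tau S, tau set0, (forall U, tau U -> U `<=` S),
      (forall U V, tau U -> tau V -> tau (U `&` V)) &
      (forall F : set (set A), F `<=` tau -> tau (\bigcup_(U in F) U))].

Definition ltop (T : topologicalType) : set (set T) := open.

Definition sub_top {A : Type} (tau : set (set A)) (S : set A) : set (set A) :=
  [set W | exists O, tau O /\ W = O `&` S].

Definition ind_top {A A' : Type} (S : set A) (j : A -> A') (tau : set (set A')) :
  set (set A) := [set W | exists O, tau O /\ W = S `&` j @^-1` O].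

Definition prod_top {A A' : Type} (tau1 : set (set A)) (tau2 : set (set A')) :
  set (set (A * A')) :=
  [set W | forall p, W p -> exists U V, [/\ tau1 U, tau2 V, U p.1, V p.2 &
                                            U `*` V `<=` W]].

Definition cont {A A' : Type} (S : set A) (sigma : set (set A)) (f : A -> A')
  (tau : set (set A')) : Prop :=
  forall O, tau O -> sigma (S `&` f @^-1` O).

Definition nbhd_of {A : Type} (tau : set (set A)) (p : A) (N : set A) : Prop :=
  exists O, [/\ tau O, O p & O `<=` N].

End Topo.
Arguments ltop T : clear implicits.

(* smallest natural number m with x <= m (0 if none exists) *)
Definition nceil {K : numFieldType} (x : K) : nat :=
  match pselect (exists m : nat, (fun m : nat => x <= m%:R) m) with
  | left h => ex_minn h
  | right _ => 0%N
  end.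

(* A bundle over X with fibre E_x = B x is encoded by its total set
   Tot B = {x : X & B x} (pi = projT1) together with a topology on it. *)
Unset Implicit Arguments.
Section Bundles.
Context {K : numFieldType} {X : topologicalType}.
Variable B : X -> completeNormedModType K.

Definition Tot := {x : X & B x}.
(* the fibre product E x_X E, embedded in E * E by jFP *)
Definition FP := {x : X & (B x * B x)%type}.
Definition jFP (p : FP) : Tot * Tot :=
  (existT B (projT1 p) (projT2 p).1, existT B (projT1 p) (projT2 p).2).

Definition pi (f : Tot) : X := projT1 f.
Definition nrm (f : Tot) : K := `|(projT2 f : B (projT1 f))|.
Definition zsec (x : X) : Tot := existT B x 0.
Definition addFP (p : FP) : Tot := existT B (projT1 p) ((projT2 p).1 + (projT2 p).2).
Definition smul (k : K) (f : Tot) : Tot := existT B (projT1 f) (k *: projT2 f).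
Definition dFP (p : FP) : K := `|((projT2 p).1 - (projT2 p).2 : B (projT1 p))|.

Definition ball_n (n : nat) : set Tot := [set f | nrm f <= n%:R].
Definition FPnm (n m : nat) : set FP :=
  [set p : FP | nrm (jFP p).1 <= n%:R /\ nrm (jFP p).2 <= m%:R].

Definition tube (U : set X) (r : K) : set Tot := [set f | U (pi f) /\ nrm f < r].

Definition BanachBundle (tau : set (set Tot)) : Prop :=
  [/\ is_topology setT tau,
      cont setT tau pi (ltop X) /\ (forall W, tau W -> open (pi @` W)),
      cont setT (prod_top (ltop K) tau) (fun p => smul p.1 p.2) tau /\
      cont setT (ind_top setT jFP (prod_top tau tau)) addFP tau,
      (forall r : K, tau [set f | nrm f < r]) &
      forall x : X,
        (forall U r, open U -> U x -> 0 < r -> nbhd_of tau (zsec x) (tube U r)) /\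
        (forall N, nbhd_of tau (zsec x) N ->
           exists U r, [/\ open U, U x, 0 < r & tube U r `<=` N])].

Definition Veps (n : nat) (V : set Tot) (eps : K) : set Tot :=
  [set g : Tot | ball_n n g /\ exists b : B (projT1 g), V (existT B (projT1 g) b) /\
                    `|((projT2 g : B (projT1 g)) - b : B (projT1 g))| < eps].

(* E_n (fibres: closed n-balls of B x, norm metric) with topology taun is a
   bundle of complete metric spaces (bounded by 2n; completeness of fibres and
   the bound are automatic from the encoding). *)
Definition MetricBundle (n : nat) (taun : set (set Tot)) : Prop :=
  [/\ is_topology (ball_n n) taun,
      (forall r : K, ind_top (FPnm n n) jFP (prod_top taun taun)
                        [set p | FPnm n n p /\ dFP p < r]),
      cont (ball_n n) taun pi (ltop X) /\ (forall W, taun W -> open (pi @` W)) &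
      forall W f, taun W -> W f ->
        exists V eps, [/\ taun V, V f, 0 < eps, V `<=` Veps n V eps &
                          Veps n V eps `<=` W]].

(* bundle of models of the continuous theory of Banach spaces:
   taus n is the topology on E_n (n >= 1; taus 0 is irrelevant) *)
Definition ModelBundle (taus : nat -> set (set Tot)) : Prop :=
  [/\ forall n, (0 < n)%N -> MetricBundle n (taus n),
      (forall n m, (0 < n)%N -> (n < m)%N -> cont (ball_n n) (taus n) id (taus m)),
      (forall n m, (0 < n)%N -> (0 < m)%N ->
         cont (FPnm n m) (ind_top (FPnm n m) jFP (prod_top (taus n) (taus m)))
              addFP (taus (n + m)%N)),
      (forall (k : K) n, (0 < n)%N ->
         cont (ball_n n) (taus n) (smul k) (taus (maxn 1 (nceil (`|k| * n%:R))))) &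
      cont setT (ltop X) zsec (taus 1%N)].

Definition Phi (tau : set (set Tot)) : nat -> set (set Tot) :=
  fun n => sub_top tau (ball_n n).

Definition Psi (taus : nat -> set (set Tot)) : set (set Tot) :=
  [set U | forall n, (0 < n)%N -> taus n (U `&` ball_n n)].

End Bundles.
Set Implicit Arguments.

Section Morphisms.
Context {K : numFieldType} {X : topologicalType}.
Variables B B' : X -> completeNormedModType K.

Definition fib_lin_contr (phi : forall x, B x -> B' x) : Prop :=
  forall x, [/\ forall a b, phi x (a + b) = phi x a + phi x b,
                forall (k : K) a, phi x (k *: a) = k *: phi x a &
                forall a, `|phi x a| <= `|a|].

Definition totmap (phi : forall x, B x -> B' x) (f : Tot B) : Tot B' :=
  existT B' (projT1 f) (phi _ (projT2 f)).

Definition BanachMor (tau : set (set (Tot B))) (tau' : set (set (Tot B')))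
  (phi : forall x, B x -> B' x) : Prop :=
  fib_lin_contr phi /\ cont setT tau (totmap phi) tau'.

Definition ModelMor (taus : nat -> set (set (Tot B)))
  (taus' : nat -> set (set (Tot B'))) (phi : forall x, B x -> B' x) : Prop :=
  fib_lin_contr phi /\
  forall n, (0 < n)%N -> cont (ball_n B n) (taus n) (totmap phi) (taus' n).

End Morphisms.

(* The functor Phi cuts a Banach bundle into its closed balls E_n with the
   subspace topologies; every axiom of a bundle of models is the restriction
   of the corresponding axiom of E, and openness of pi on E_n is recovered by
   rescaling points of norm slightly above n back into E_n.
   Conversely, the final topology Psi of a compatible family (E_n) induces
   taus n again on E_n: by the V_eps condition and the upper semicontinuity of
   the distance, an open subset of E_n is the trace of an open subset of
   E_(n+1), and iterating gives an increasing chain whose union is open in the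
   final topology.  The Banach bundle axioms of the union are then checked
   locally on some E_n, which exists by the archimedean property of the
   scalars.  Both constructions leave the fibrewise maps unchanged and
   continuity of a contraction E -> E' can be tested on the E_n, so the
   hom-sets correspond as well. *)
From Pilot Require Import Defs.
From HB Require Import structures.
From mathcomp Require Import all_boot all_order all_algebra.
From mathcomp Require Import all_classical all_reals all_analysis.
From mathcomp.real_closed Require Import complex.
From mathcomp Require Import ring.
Import Order.TTheory GRing.Theory Num.Theory.
Import numFieldNormedType.Exports.
Local Open Scope classical_set_scope.
Local Open Scope ring_scope.
Set Implicit Arguments.
Unset Strict Implicit.

Section SetTopology.
Context {A : Type}.

Lemma topology_local (S : set A) (tau : set (set A)) (W : set A) :
  is_topology S tau -> W `<=` S ->
  (forall f, W f -> exists Q, [/\ tau Q, Q f & Q `<=` W]) -> tau W.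
Proof.
case=> _ _ _ _ hU WS hloc.
have -> : W = \bigcup_(Q in [set Q | tau Q /\ Q `<=` W]) Q.
  apply/seteqP; split.
  - by move=> f /hloc [Q [tQ Qf QW]]; exists Q.
  - by move=> f [Q [_ QW] Qf]; exact: QW.
by apply: hU => Q [].
Qed.

Lemma topologyI (S : set A) (tau : set (set A)) U V :
  is_topology S tau -> tau U -> tau V -> tau (U `&` V).
Proof. by case=> _ _ _ hI _; apply: hI. Qed.

Lemma topology_subset (S : set A) (tau : set (set A)) U :
  is_topology S tau -> tau U -> U `<=` S.
Proof. by case=> _ _ hs _ _; apply: hs. Qed.

Lemma topology_carrier (S : set A) (tau : set (set A)) :
  is_topology S tau -> tau S.
Proof. by case. Qed.

Lemma sub_top_topology (S : set A) tau :
  is_topology setT tau -> is_topology S (sub_top tau S).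
Proof.
case=> hT h0 _ hI hU; split.
- by exists setT; rewrite setTI.
- by exists set0; rewrite set0I.
- by move=> U [Q [_ ->]] f [].
- move=> U V [Q1 [t1 ->]] [Q2 [t2 ->]]; exists (Q1 `&` Q2); split; first exact: hI.
  by rewrite setIACA setIid.
- move=> F hF; exists (\bigcup_(Q in [set Q | tau Q /\ F (Q `&` S)]) Q); split.
    by apply: hU => Q [].
  apply/seteqP; split.
  + move=> f [W FW Wf]; have [Q [tQ eW]] := hF W FW.
    rewrite eW in Wf FW; case: Wf => Qf Sf; split => //; by exists Q.
  + by move=> f [[Q [tQ FQ] Qf] Sf]; exists (Q `&` S).
Qed.

Lemma bigcup_chain_trace (b c : nat -> set A) :
  (forall i j, (i <= j)%N -> b i `<=` b j) ->
  (forall k, c k = c k.+1 `&` b k) ->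
  forall k, (\bigcup_l c l) `&` b k = c k.
Proof.
move=> bS cS.
have cb k : c k `<=` b k by rewrite cS => f [].
have cD d k : c (k + d)%N `&` b k = c k.
  elim: d => [|d IH]; first by rewrite addn0; apply/seteqP; split=> [f []|f /[dup] /cb].
  rewrite -IH addnS [c (k + d)%N]cS; apply/seteqP; split.
  - by move=> f [cf bf]; split=> //; split=> //; apply: bS bf; exact: leq_addr.
  - by move=> f [[]].
move=> k; apply/seteqP; split; last by move=> f ck; split; [exists k | exact: cb].
move=> f [[l _ cl] bf]; case: (leqP l k) => lk.
  by move: cl; rewrite -(subnKC lk) -(cD (k - l)%N l) subnKC // => -[].
by rewrite -(cD (l - k)%N k) subnKC ?(ltnW lk).
Qed.

Definition prod_interior {B C : Type} (t1 : set (set B)) (t2 : set (set C))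
  (P : B * C -> Prop) : set (B * C) :=
  [set q | exists U V, [/\ t1 U, t2 V, U q.1, V q.2 &
     forall q', U q'.1 -> V q'.2 -> P q']].

Lemma prod_interior_open {B C : Type} (t1 : set (set B)) (t2 : set (set C)) P :
  prod_top t1 t2 (prod_interior t1 t2 P).
Proof.
move=> q [U [V [tU tV Uq Vq hP]]]; exists U, V; split => //.
by move=> [a b] [/= Ua Vb]; exists U, V.
Qed.

Lemma ind_top_prod_local {B C D : Type} (S : set D) (j : D -> B * C) t1 t2
    (P : D -> Prop) :
  (forall p, S p -> P p ->
     prod_interior t1 t2 (fun q => forall p', S p' -> j p' = q -> P p') (j p)) ->
  ind_top S j (prod_top t1 t2) (S `&` P).
Proof.
move=> h; exists (prod_interior t1 t2 (fun q => forall p', S p' -> j p' = q -> P p')).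
split; first exact: prod_interior_open.
apply/seteqP; split; first by move=> p [Sp Pp]; split => //; apply: h.
by move=> p [Sp [U [V [_ _ Uq Vq hP]]]]; split => //; apply: (hP (j p)).
Qed.

End SetTopology.

Lemma open_local (X : topologicalType) (W : set X) :
  (forall x, W x -> exists U, [/\ open U, U x & U `<=` W]) -> open W.
Proof.
move=> h; rewrite openE => x /h [U [oU Ux UW]].
by apply: filterS UW _; exact: open_nbhs_nbhs.
Qed.

Definition nat_archimedean (K : numFieldType) :=
  forall x : K, 0 <= x -> exists m : nat, x < m%:R.

Lemma nat_archimedean_pos (K : numFieldType) (x : K) : nat_archimedean K ->
  0 <= x -> exists n, (0 < n)%N /\ x < n%:R.
Proof.
move=> harch /harch [m hm]; exists m.+1; split => //.
by apply: lt_le_trans hm _; rewrite ler_nat.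
Qed.

Lemma scalars_nat_archimedean (R : realType) (b : bool) :
  nat_archimedean (scalars R b).
Proof.
case: b => /= x x0; last by exists (Num.bound x); exact: archi_boundP.
move: x x0 (ger0_Im x0) => [a c] x0 /= c0; subst c.
have a0 : 0 <= a by rewrite -ler0c.
by exists (Num.bound a); rewrite -(rmorph_nat (real_complex R)) ltcR archi_boundP.
Qed.

Lemma nceil_ge (K : numFieldType) (x : K) :
  (exists m : nat, x <= m%:R) -> x <= (nceil x)%:R.
Proof. by move=> h; rewrite /nceil; case: pselect => [h'|//]; case: ex_minnP. Qed.

Lemma nceil_scale_ge (K : numFieldType) (k : K) n : nat_archimedean K ->
  `|k| * n%:R <= (maxn 1 (nceil (`|k| * n%:R)))%:R.
Proof.
move=> harch; apply: le_trans (_ : _ <= (nceil (`|k| * n%:R))%:R) _.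
  apply: nceil_ge; have [m /ltW hm] := harch _ (mulr_ge0 (normr_ge0 k) (ler0n _ n)).
  by exists m.
by rewrite ler_nat leq_maxr.
Qed.

Section Norms.
Context {K : numFieldType} {X : topologicalType} (B : X -> completeNormedModType K).

Lemma nrm_ge0 (f : Tot B) : 0 <= nrm B f.
Proof. exact: normr_ge0. Qed.

Lemma nrm_smul k (f : Tot B) : nrm B (smul B k f) = `|k| * nrm B f.
Proof. by case: f => x a; rewrite /nrm /smul /= normrZ. Qed.

Lemma nrm_zsec x : nrm B (zsec B x) = 0.
Proof. by rewrite /nrm /zsec /= normr0. Qed.

Lemma nrm_addFP (p : FP B) :
  nrm B (addFP B p) <= nrm B (jFP B p).1 + nrm B (jFP B p).2.
Proof. by case: p => x [a b]; rewrite /nrm /= ler_normD. Qed.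

Lemma smul1 (f : Tot B) : smul B 1 f = f.
Proof. by case: f => x a; rewrite /smul /= scale1r. Qed.

Lemma ball_n_le n m : (n <= m)%N -> ball_n B n `<=` ball_n B m.
Proof. by move=> nm f; rewrite /ball_n /= => h; apply: le_trans h _; rewrite ler_nat. Qed.

Lemma ball_n_zsec n x : ball_n B n (zsec B x).
Proof. by rewrite /ball_n /= nrm_zsec. Qed.

Lemma ball_n_lt n (f : Tot B) : nrm B f < n%:R -> ball_n B n f.
Proof. exact: ltW. Qed.

Lemma ball_n_smul (k : K) n (f : Tot B) : nat_archimedean K -> ball_n B n f ->
  ball_n B (maxn 1 (nceil (`|k| * n%:R))) (smul B k f).
Proof.
move=> harch bf; rewrite /ball_n /= nrm_smul.
by apply: le_trans (nceil_scale_ge k n harch); exact: ler_wpM2l.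
Qed.

End Norms.

Section BanachBundleFacts.
Context {K : numFieldType} {X : topologicalType} (B : X -> completeNormedModType K).
Variable tau : set (set (Tot B)).
Hypothesis hB : BanachBundle B tau.

Lemma bundle_topology : is_topology setT tau.
Proof. by case: hB. Qed.

Lemma bundle_pi_preimage U : open U -> tau (Defs.pi B @^-1` U).
Proof. by case: hB => _ [hc _] _ _ _ /hc; rewrite setTI. Qed.

Lemma bundle_pi_image W : tau W -> open (Defs.pi B @` W).
Proof. by case: hB => _ [_ ho] _ _ _; apply: ho. Qed.

Lemma bundle_nrm_lt r : tau [set f | nrm B f < r].
Proof. by case: hB. Qed.

Lemma bundle_smul_local Q : tau Q -> forall k f, Q (smul B k f) ->
  exists U V, [/\ open U, tau V, U k, V f &
     forall k' g, U k' -> V g -> Q (smul B k' g)].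
Proof.
case: hB => _ _ [hs _] _ _ tQ k f Qkf.
have [U [V [oU tV Uk Vf UV]]] := hs Q tQ (k, f) (conj I Qkf).
exists U, V; split => // k' g Uk' Vg.
by have [_ /=] := UV (k', g) (conj Uk' Vg).
Qed.

Lemma bundle_smul_preimage k Q : tau Q -> tau (smul B k @^-1` Q).
Proof.
move=> tQ; apply: (topology_local bundle_topology) => // f Qkf.
have [U [V [_ tV Uk Vf h]]] := bundle_smul_local tQ Qkf.
by exists V; split => // g Vg; exact: h.
Qed.

Lemma bundle_add_local Q : tau Q -> forall p0, Q (addFP B p0) ->
  exists U V, [/\ tau U, tau V, U (jFP B p0).1, V (jFP B p0).2 &
    forall p, U (jFP B p).1 -> V (jFP B p).2 -> Q (addFP B p)].
Proof.
case: hB => _ _ [_ ha] _ _ tQ p0 Qp0.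
have [P [hP eP]] := ha Q tQ.
have [_ Pp0] : (setT `&` jFP B @^-1` P) p0 by rewrite -eP.
have [U [V [tU tV Up Vp UV]]] := hP _ Pp0.
exists U, V; split => // p Up' Vp'.
have : (setT `&` jFP B @^-1` P) p by split => //; apply: UV; split.
by rewrite -eP => -[].
Qed.

Lemma bundle_zero_tube x N : nbhd_of tau (zsec B x) N ->
  exists U r, [/\ open U, U x, 0 < r & tube B U r `<=` N].
Proof. by case: hB => _ _ _ _ hb; have [_ h] := hb x; apply: h. Qed.

Lemma bundle_zsec_preimage Q : tau Q -> open (zsec B @^-1` Q).
Proof.
move=> tQ; apply: open_local => x Qx.
have [U [r [oU Ux r0 UrQ]]] : exists U r, [/\ open U, U x, 0 < r & tube B U r `<=` Q].
  by apply: bundle_zero_tube; exists Q; split.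
by exists U; split => // y Uy; apply: UrQ; split => //; rewrite /= nrm_zsec.
Qed.

End BanachBundleFacts.

Lemma sub_one_inv_le (K : numFieldType) (t : K) : 0 < t -> `|1 - (1 + t)^-1| <= t.
Proof.
move=> t0; have t1 : 0 < 1 + t by rewrite addr_gt0.
have -> : 1 - (1 + t)^-1 = t / (1 + t) by field; rewrite lt0r_neq0.
rewrite ger0_norm; last by rewrite divr_ge0 // ltW.
by rewrite ler_pdivrMr // mulrDr mulr1 lerDl mulr_ge0 // ltW.
Qed.

Section PhiModelBundle.
Context {K : numFieldType} {X : topologicalType} (B : X -> completeNormedModType K).
Variable tau : set (set (Tot B)).
Hypothesis hB : BanachBundle B tau.
Hypothesis harch : nat_archimedean K.

Lemma Phi_topology n : is_topology (ball_n B n) (Phi B tau n).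
Proof. exact: sub_top_topology (bundle_topology hB). Qed.

Lemma Phi_dist_usc n r :
  ind_top (FPnm B n n) (jFP B) (prod_top (Phi B tau n) (Phi B tau n))
    [set p | FPnm B n n p /\ dFP B p < r].
Proof.
apply: (@ind_top_prod_local _ _ _ (FPnm B n n) (jFP B) _ _ (fun p => dFP B p < r)).
case=> x [a b] [na nb] dp.
have Qp : [set f | nrm B f < r] (addFP B (existT _ x (a, - b))) by [].
have [U [V [tU tV Ua Vb hUV]]] := bundle_add_local hB (bundle_nrm_lt hB r) Qp.
exists (U `&` ball_n B n), (smul B (-1) @^-1` V `&` ball_n B n); split.
- by exists U.
- by exists (smul B (-1) @^-1` V); split => //; apply: bundle_smul_preimage.
- by [].
- by split => //; rewrite /smul /= scaleN1r.
- move=> q' [Uq _] [Vq _] [y [c d]] _ eq; subst q'.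
  have := hUV (existT _ y (c, (-1) *: d)) Uq Vq.
  by rewrite /addFP /nrm /= scaleN1r.
Qed.

Lemma Phi_pi_cont n : cont (ball_n B n) (Phi B tau n) (Defs.pi B) (ltop X).
Proof.
move=> U oU; exists (Defs.pi B @^-1` U).
by split; [exact: bundle_pi_preimage | rewrite setIC].
Qed.

(* A point g of norm < n (1 + t) close to f is rescaled to g / (1 + t) in E_n;
   for small t this stays in Q by continuity of the scalar action at 1. *)
Lemma Phi_pi_image n : (0 < n)%N -> forall W, Phi B tau n W -> open (Defs.pi B @` W).
Proof.
move=> n0 W [Q [tQ ->]]; apply: open_local => x [f [Qf bf] <-].
have Q1 : Q (smul B 1 f) by rewrite smul1.
have [U [V [oU tV U1 Vf hUV]]] := bundle_smul_local hB tQ Q1.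
have /nbhs_ballP [d d0 hd] : nbhs (1 : K) U by apply: open_nbhs_nbhs.
set t := d / 2.
have t0 : 0 < t by rewrite divr_gt0.
have t1 : 0 < 1 + t by rewrite addr_gt0.
set V' := V `&` [set g | nrm B g < n%:R * (1 + t)].
exists (Defs.pi B @` V'); split.
- apply: (bundle_pi_image hB).
  exact: topologyI (bundle_topology hB) tV (bundle_nrm_lt hB _).
- exists f => //; split => //; apply: le_lt_trans bf _.
  by rewrite mulrDr mulr1 ltrDl mulr_gt0 // ltr0n.
- move=> y [g [Vg ng] <-].
  set l := (1 + t)^-1.
  have l0 : 0 < l by rewrite invr_gt0.
  exists (smul B l g); last by case: g {Vg ng}.
  split.
  + apply: hUV => //; apply: hd; rewrite /ball /=.
    apply: le_lt_trans (sub_one_inv_le t0) _.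
    by rewrite /t ltr_pdivrMr // ltr_pMr // ltr1n.
  + rewrite /ball_n /= nrm_smul (ger0_norm (ltW l0)).
    apply: (@le_trans _ _ (l * (n%:R * (1 + t)))).
      by apply: ler_wpM2l; [exact: ltW | exact: ltW].
    by rewrite /l mulrCA mulVf ?mulr1 // lt0r_neq0.
Qed.

(* With f = f + 0, continuity of addition gives a neighbourhood V of f and a
   tube of radius r around the zero section such that V + tube lies in Q. *)
Lemma Phi_Veps n W f : Phi B tau n W -> W f ->
   exists V eps, [/\ Phi B tau n V, V f, 0 < eps, V `<=` Veps B n V eps &
                     Veps B n V eps `<=` W].
Proof.
move=> [Q [tQ ->]]; case: f => x a [Qf bf].
have Qp : Q (addFP B (existT _ x (a, 0))) by rewrite /addFP /= addr0.
have [U [N [tU tN Ua N0 hUN]]] := bundle_add_local hB tQ Qp.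
have [G [r [oG Gx r0 GrN]]] : exists G r, [/\ open G, G x, 0 < r & tube B G r `<=` N].
  by apply: (bundle_zero_tube hB); exists N; split.
exists ((U `&` Defs.pi B @^-1` G) `&` ball_n B n), r; split => //.
- exists (U `&` Defs.pi B @^-1` G); split => //.
  exact: topologyI (bundle_topology hB) tU (bundle_pi_preimage hB oG).
- case=> y c [[Uc Gc] bc]; split => //; exists c; split; first by split.
  by rewrite subrr normr0.
- case=> y c [bc [b [[[Ub Gb] _] hb]]]; split => //.
  have := hUN (existT _ y (b, c - b)) Ub.
  by rewrite /addFP /= (addrC b) subrK; apply; apply: GrN.
Qed.

Lemma Phi_metric n : (0 < n)%N -> MetricBundle B n (Phi B tau n).
Proof.
move=> n0; split.
- exact: Phi_topology.
- exact: Phi_dist_usc.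
- by split; [exact: Phi_pi_cont | exact: Phi_pi_image].
- exact: Phi_Veps.
Qed.

Lemma Phi_cont_preimage n m (g : Tot B -> Tot B) :
  (forall Q, tau Q -> tau (g @^-1` Q)) -> ball_n B n `<=` g @^-1` ball_n B m ->
  cont (ball_n B n) (Phi B tau n) g (Phi B tau m).
Proof.
move=> gc gb W [Q [tQ ->]]; exists (g @^-1` Q); split; first exact: gc.
apply/seteqP; split; first by move=> f [bf [Qf _]].
by move=> f [Qf bf]; split => //; split => //; apply: gb.
Qed.

Lemma Phi_add n m : cont (FPnm B n m) (ind_top (FPnm B n m) (jFP B)
      (prod_top (Phi B tau n) (Phi B tau m))) (addFP B) (Phi B tau (n + m)).
Proof.
move=> W [Q [tQ ->]].
apply: (@ind_top_prod_local _ _ _ (FPnm B n m) (jFP B) _ _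
  (fun p => (Q `&` ball_n B (n + m)) (addFP B p))).
move=> p [bp1 bp2] [Qp _].
have [U [V [tU tV Up Vp hUV]]] := bundle_add_local hB tQ Qp.
exists (U `&` ball_n B n), (V `&` ball_n B m); split => //.
- by exists U.
- by exists V.
- move=> q' [Uq bq1] [Vq bq2] p' _ eq; subst q'.
  split; first exact: hUV.
  by rewrite /ball_n /= natrD; apply: le_trans (nrm_addFP p') _; exact: lerD.
Qed.

Lemma Phi_zsec : cont setT (ltop X) (zsec B) (Phi B tau 1).
Proof.
move=> W [Q [tQ ->]].
have -> : setT `&` zsec B @^-1` (Q `&` ball_n B 1) = zsec B @^-1` Q.
  apply/seteqP; split; first by move=> x [_ []].
  by move=> x Qx; split => //; split => //; apply: ball_n_zsec.
exact: (bundle_zsec_preimage hB tQ).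
Qed.

Lemma Phi_model : ModelBundle B (Phi B tau).
Proof.
split.
- exact: Phi_metric.
- move=> n m _ nm; apply: Phi_cont_preimage => [Q tQ|f bf]; first exact: tQ.
  by have := ball_n_le (ltnW nm) bf.
- by move=> n m _ _; exact: Phi_add.
- move=> k n _; apply: Phi_cont_preimage => [Q|f]; first exact: bundle_smul_preimage.
  exact: ball_n_smul.
- exact: Phi_zsec.
Qed.

End PhiModelBundle.

Section ModelBundleFacts.
Context {K : numFieldType} {X : topologicalType} (B : X -> completeNormedModType K).
Variable taus : nat -> set (set (Tot B)).
Hypothesis hM : ModelBundle B taus.

Lemma model_metric n : (0 < n)%N -> MetricBundle B n (taus n).
Proof. by case: hM => h _ _ _ _; apply: h. Qed.

Lemma model_topology n : (0 < n)%N -> is_topology (ball_n B n) (taus n).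
Proof. by move/model_metric; case. Qed.

Lemma model_restrict n m Q : (0 < n)%N -> (n <= m)%N -> taus m Q ->
  taus n (Q `&` ball_n B n).
Proof.
move=> n0; rewrite leq_eqVlt => /orP[/eqP <-|nm] tQ.
  suff -> : Q `&` ball_n B n = Q by [].
  apply/seteqP; split => [f []//|f Qf]; split => //.
  exact: (topology_subset (model_topology n0) tQ).
by case: hM => _ hi _ _ _; have := hi n m n0 nm Q tQ; rewrite setIC.
Qed.

Lemma model_pi_preimage n U : (0 < n)%N -> open U ->
  taus n (ball_n B n `&` Defs.pi B @^-1` U).
Proof. by move=> n0 oU; have [_ _ [h _] _] := model_metric n0; apply: h. Qed.

Lemma model_pi_image n W : (0 < n)%N -> taus n W -> open (Defs.pi B @` W).
Proof. by move=> n0; have [_ _ [_ h] _] := model_metric n0; apply: h. Qed.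

Lemma model_zsec_preimage j V : (0 < j)%N -> taus j V -> open (zsec B @^-1` V).
Proof.
move=> j0 tV; have tV1 := model_restrict (ltn0Sn 0) j0 tV.
case: hM => _ _ _ _ hz; have := hz _ tV1.
suff -> : setT `&` zsec B @^-1` (V `&` ball_n B 1) = zsec B @^-1` V by [].
apply/seteqP; split; first by move=> x [_ []].
by move=> x Vx; split => //; split => //; exact: ball_n_zsec.
Qed.

(* nrm f = d(f, 0_(pi f)), so this is upper semicontinuity of the distance
   along the continuous section g |-> (g, 0_(pi g)). *)
Lemma model_nrm_lt j r : (0 < j)%N -> taus j ([set f | nrm B f < r] `&` ball_n B j).
Proof.
move=> j0; have [ht hu _ _] := model_metric j0.
apply: (topology_local ht); first by move=> f [].
case=> x a [lta bfa].
have [P [hP eP]] := hu r.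
have inS : [set p | FPnm B j j p /\ dFP B p < r] (existT _ x (a, 0)).
  split; first by split => //; rewrite /nrm /= normr0 ler0n.
  by rewrite /dFP /= subr0.
rewrite eP in inS; case: inS => _ Pp0.
have [U [V [tU tV Ua V0 UV]]] := hP _ Pp0.
exists (U `&` (ball_n B j `&` Defs.pi B @^-1` (zsec B @^-1` V))); split.
- exact: topologyI ht tU (model_pi_preimage j0 (model_zsec_preimage j0 tV)).
- by split => //; split.
- case=> y c [Uc [bc Vz]]; split => //.
  have inS : (FPnm B j j `&` jFP B @^-1` P) (existT _ y (c, 0)).
    split; first by split => //; rewrite /nrm /= normr0 ler0n.
    by apply: UV; split.
  by rewrite -eP in inS; case: inS => _; rewrite /dFP /= subr0.
Qed.

(* For f in W take V, eps with V_eps in W; the points of E_m over pi(V) that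
   are eps-close (in a uniform neighbourhood of (f, f)) to a point of V form
   an open set of E_m whose part in E_n lies in V_eps, hence in W. *)
Lemma model_extend n m W : (0 < n)%N -> (n < m)%N -> taus n W ->
  exists Q, taus m Q /\ W = Q `&` ball_n B n.
Proof.
move=> n0 nm tW.
have m0 : (0 < m)%N by apply: leq_trans n0 (ltnW nm).
have htm := model_topology m0; have htn := model_topology n0.
exists (\bigcup_(S in [set S | taus m S /\ S `&` ball_n B n `<=` W]) S); split.
  by case: htm => _ _ _ _ hU; apply: hU => S [].
apply/seteqP; split; last by move=> f [[S [_ SW] Sf] bf]; apply: SW.
move=> f Wf; split; last exact: (topology_subset htn tW).
have [_ _ _ hV] := model_metric n0.
have [V [eps [tV Vf eps0 _ hVW]]] := hV W f tW Wf.
have [_ hu _ _] := model_metric m0.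
have [P [hP eP]] := hu eps.
move: f Wf Vf => [x a] Wf Vf.
have bfn : ball_n B n (existT _ x a) by exact: (topology_subset htn tW).
have bfm : ball_n B m (existT _ x a) := ball_n_le (ltnW nm) bfn.
have inS : [set p | FPnm B m m p /\ dFP B p < eps] (existT _ x (a, a)).
  by split; [split | rewrite /dFP /= subrr normr0].
rewrite eP in inS; case: inS => _ Pp0.
have [U1 [U2 [tU1 tU2 U1a U2a UV]]] := hP _ Pp0.
set U := U1 `&` U2.
have tU : taus m U by exact: topologyI htm tU1 tU2.
set V' := V `&` (U `&` ball_n B n).
have tV' : taus n V' by apply: topologyI htn tV (model_restrict n0 (ltnW nm) tU).
set G := Defs.pi B @` V'.
have oG : open G by exact: model_pi_image n0 tV'.
exists (U `&` (ball_n B m `&` Defs.pi B @^-1` G)); last first.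
  split; first by split.
  by split => //; exists (existT _ x a) => //; split => //; split => //; split.
split; first exact: topologyI htm tU (model_pi_preimage m0 oG).
case=> y c [[[U1c U2c] [bmc Gy]] bnc].
case: Gy => -[y' d] [Vd [[U1d U2d] bnd]] /= ey; subst y'.
have inS : (FPnm B m m `&` jFP B @^-1` P) (existT _ y (c, d)).
  split; first by split => //; apply: (ball_n_le (ltnW nm) bnd).
  by apply: UV; split.
rewrite -eP in inS; case: inS => _ dd.
by apply: hVW; split => //; exists d.
Qed.

Lemma model_extend_le n m W : (0 < n)%N -> (n <= m)%N -> taus n W ->
  exists Q, taus m Q /\ W = Q `&` ball_n B n.
Proof.
move=> n0; rewrite leq_eqVlt => /orP[/eqP <-|nm] tW; last exact: model_extend.
exists W; split => //; apply/seteqP; split => [f Wf|f []//]; split => //.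
exact: (topology_subset (model_topology n0) tW).
Qed.

Lemma Psi_chain n (c : nat -> set (Tot B)) : (0 < n)%N ->
  (forall k, taus (n + k) (c k)) -> (forall k, c k = c k.+1 `&` ball_n B (n + k)) ->
  Psi B taus (\bigcup_k c k) /\ (\bigcup_k c k) `&` ball_n B n = c 0%N.
Proof.
move=> n0 tc cS.
have bS i j : (i <= j)%N -> ball_n B (n + i) `<=` ball_n B (n + j).
  by move=> ij; apply: ball_n_le; rewrite leq_add2l.
have trace := bigcup_chain_trace bS cS.
split; last by rewrite -(trace 0%N) addn0.
move=> j j0; case: (leqP n j) => nj.
  by have := trace (j - n)%N; rewrite subnKC // => ->; have := tc (j - n)%N; rewrite subnKC.
have -> : (\bigcup_k c k) `&` ball_n B j = c 0%N `&` ball_n B j.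
  rewrite -(trace 0%N) addn0; apply/seteqP; split => [f [cf bf]|f [[cf _] bf]] //.
  by split => //; split => //; apply: (ball_n_le (ltnW nj) bf).
by apply: model_restrict j0 (ltnW nj) _; have := tc 0%N; rewrite addn0.
Qed.

Lemma model_extend_Psi n W : (0 < n)%N -> taus n W ->
  exists U, Psi B taus U /\ U `&` ball_n B n = W.
Proof.
move=> n0 tW.
have hstep (jQ : nat * set (Tot B)) : exists Q', (0 < jQ.1)%N -> taus jQ.1 jQ.2 ->
    taus jQ.1.+1 Q' /\ jQ.2 = Q' `&` ball_n B jQ.1.
  case: jQ => j Q /=; have [[j0 tQ]|h] := pselect ((0 < j)%N /\ taus j Q).
    by have [Q' ?] := model_extend j0 (ltnSn j) tQ; exists Q'.
  by exists set0 => j0 tQ; exfalso; apply: h.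
have [ext hext] := choice hstep.
pose c := fix c (k : nat) : set (Tot B) :=
  if k is k'.+1 then ext ((n + k')%N, c k') else W.
have nk0 k : (0 < n + k)%N by rewrite addn_gt0 n0.
have tc k : taus (n + k)%N (c k).
  elim: k => [|k IH]; first by rewrite addn0.
  by rewrite addnS; have [tc _] := hext ((n + k)%N, c k) (nk0 k) IH; exact: tc.
have cS k : c k = c k.+1 `&` ball_n B (n + k).
  by have [_ e] := hext ((n + k)%N, c k) (nk0 k) (tc k); exact: e.
have [pU trace] := Psi_chain n0 tc cS.
by exists (\bigcup_k c k).
Qed.

Lemma Phi_Psi n : (0 < n)%N -> Phi B (Psi B taus) n = taus n.
Proof.
move=> n0; apply/funext => W; apply/propext; split.
- by move=> [Q [pQ ->]]; apply: pQ.
- by move=> /(model_extend_Psi n0) [U [pU e]]; exists U.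
Qed.

End ModelBundleFacts.

Lemma tube_radius (K : numFieldType) (eps : K) : 0 < eps ->
  [/\ 0 < eps / (eps + 2), eps / (eps + 2) <= 1 & eps / (eps + 2) + eps / (eps + 2) <= eps].
Proof.
move=> e0; have e2 : 0 < eps + 2 by rewrite addr_gt0.
split.
- by rewrite divr_gt0.
- by rewrite ler_pdivrMr // mul1r lerDl.
- rewrite -mulrDl ler_pdivrMr // mulrDr.
  have -> : eps + eps = eps * 2 by rewrite mulrDr mulr1.
  by rewrite lerDr mulr_ge0 // ltW.
Qed.

Section PsiBanachBundle.
Context {K : numFieldType} {X : topologicalType} (B : X -> completeNormedModType K).
Variable taus : nat -> set (set (Tot B)).
Hypothesis hM : ModelBundle B taus.
Hypothesis harch : nat_archimedean K.

Lemma Psi_topology : is_topology setT (Psi B taus).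
Proof.
split.
- by move=> n n0; rewrite setTI; exact: topology_carrier (model_topology hM n0).
- by move=> n n0; rewrite set0I; case: (model_topology hM n0).
- by [].
- move=> U V hU hV n n0.
  have -> : U `&` V `&` ball_n B n = (U `&` ball_n B n) `&` (V `&` ball_n B n).
    by rewrite setIACA setIid.
  exact: topologyI (model_topology hM n0) (hU n n0) (hV n n0).
- move=> F hF n n0; apply: (topology_local (model_topology hM n0)); first by move=> f [].
  move=> f [[U FU Uf] bf]; exists (U `&` ball_n B n); split => //; first exact: hF.
  by move=> g [Ug bg]; split => //; exists U.
Qed.

Lemma Psi_open_lt n A : (0 < n)%N -> taus n A ->
  Psi B taus (A `&` [set f | nrm B f < n%:R]).
Proof.
move=> n0 tA j j0; case: (leqP n j) => nj.
  have [Q [tQ ->]] := model_extend_le hM n0 nj tA.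
  have -> : Q `&` ball_n B n `&` [set f | nrm B f < n%:R] `&` ball_n B j =
            Q `&` ([set f | nrm B f < n%:R] `&` ball_n B j).
    apply/seteqP; split; first by move=> f [[[Qf _] lf] bf].
    by move=> f [Qf [lf bf]]; split => //; split => //; split => //; exact: ball_n_lt.
  exact: topologyI (model_topology hM j0) tQ (model_nrm_lt hM _ j0).
have -> : A `&` [set f | nrm B f < n%:R] `&` ball_n B j =
          (A `&` ball_n B j) `&` ([set f | nrm B f < n%:R] `&` ball_n B j).
  by rewrite setIACA setIid.
exact: topologyI (model_topology hM j0) (model_restrict hM j0 (ltnW nj) tA)
                 (model_nrm_lt hM _ j0).
Qed.

Lemma Psi_pi_preimage U : open U -> Psi B taus (Defs.pi B @^-1` U).
Proof. by move=> oU n n0; rewrite setIC; exact: model_pi_preimage. Qed.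

Lemma Psi_pi_image W : Psi B taus W -> open (Defs.pi B @` W).
Proof.
move=> pW; apply: open_local => x [f Wf <-].
have [n [n0 hn]] := nat_archimedean_pos harch (nrm_ge0 f).
exists (Defs.pi B @` (W `&` ball_n B n)); split.
- exact: (model_pi_image hM n0 (pW n n0)).
- by exists f => //; split => //; exact: ball_n_lt.
- by move=> y [g [Wg _] <-]; exists g.
Qed.

Lemma Psi_nrm_lt r : Psi B taus [set f | nrm B f < r].
Proof. by move=> n n0; exact: model_nrm_lt. Qed.

Lemma Psi_add_local Q : Psi B taus Q -> forall p0, Q (addFP B p0) ->
  exists U V, [/\ Psi B taus U, Psi B taus V, U (jFP B p0).1, V (jFP B p0).2 &
    forall p, U (jFP B p).1 -> V (jFP B p).2 -> Q (addFP B p)].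
Proof.
move=> pQ [x [a b]] Qp0.
have [n [n0 hn]] := nat_archimedean_pos harch (nrm_ge0 (existT _ x a)).
have [m [m0 hm]] := nat_archimedean_pos harch (nrm_ge0 (existT _ x b)).
have nm0 : (0 < n + m)%N by rewrite addn_gt0 n0.
case: hM => _ _ ha _ _.
have [P [hP eP]] := ha n m n0 m0 _ (pQ _ nm0).
have inS : (FPnm B n m `&` addFP B @^-1` (Q `&` ball_n B (n + m))) (existT _ x (a, b)).
  split; first by split; exact: ltW.
  split => //; rewrite /ball_n /= natrD.
  by apply: le_trans (nrm_addFP (existT _ x (a, b))) _; apply: lerD; exact: ltW.
rewrite eP in inS; case: inS => _ Pp0.
have [U [V [tU tV Ua Vb UV]]] := hP _ Pp0.
exists (U `&` [set f | nrm B f < n%:R]), (V `&` [set f | nrm B f < m%:R]); split.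
- exact: Psi_open_lt.
- exact: Psi_open_lt.
- by [].
- by [].
- move=> p [Up lp] [Vp lp'].
  have inS : (FPnm B n m `&` jFP B @^-1` P) p.
    by split; [split; exact: ltW | apply: UV; split].
  by rewrite -eP in inS; case: inS => _ [].
Qed.

Lemma Psi_add : cont setT (ind_top setT (jFP B) (prod_top (Psi B taus) (Psi B taus)))
   (addFP B) (Psi B taus).
Proof.
move=> Q pQ.
apply: (@ind_top_prod_local _ _ _ setT (jFP B) _ _ (fun p => Q (addFP B p))).
move=> p _ Qp; have [U [V [tU tV Up Vp h]]] := Psi_add_local pQ Qp.
by exists U, V; split => // q' Uq Vq p' _ eq; subst q'; exact: h.
Qed.

Lemma Psi_tube U r : open U -> Psi B taus (tube B U r).
Proof.
move=> oU n n0.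
have -> : tube B U r `&` ball_n B n =
   ([set f | nrm B f < r] `&` ball_n B n) `&` (ball_n B n `&` Defs.pi B @^-1` U).
  apply/seteqP; split; first by move=> f [[Uf lf] bf].
  by move=> f [[lf bf] [_ Uf]].
exact: topologyI (model_topology hM n0) (model_nrm_lt hM _ n0) (model_pi_preimage hM n0 oU).
Qed.

(* A neighbourhood of 0_x contains some V_eps around 0_x in E_1; two vectors of
   norm < e := eps / (eps + 2) lie in E_1 and are eps-close, so the tube of
   radius e over pi(V) lies in V_eps. *)
Lemma Psi_zero_tube x N : nbhd_of (Psi B taus) (zsec B x) N ->
  exists U r, [/\ open U, U x, 0 < r & tube B U r `<=` N].
Proof.
move=> [Q [pQ Qz QN]].
have tQ := pQ 1%N (ltn0Sn 0).
have [_ _ _ hV] := model_metric hM (ltn0Sn 0).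
have [V [eps [tV Vz eps0 _ hVW]]] := hV _ _ tQ (conj Qz (ball_n_zsec B 1 x)).
have [e0 e1 e2] := tube_radius eps0.
set e := eps / (eps + 2) in e0 e1 e2.
set V' := V `&` ([set f | nrm B f < e] `&` ball_n B 1).
have tV' : taus 1 V'.
  exact: topologyI (model_topology hM (ltn0Sn 0)) tV (model_nrm_lt hM _ (ltn0Sn 0)).
exists (Defs.pi B @` V'), e; split => //.
- exact: (model_pi_image hM (ltn0Sn 0) tV').
- exists (zsec B x) => //; split => //; split; last exact: ball_n_zsec.
  by rewrite /= nrm_zsec.
- case=> y c [[[y' d] [Vd [ld bd]]] /= ey lc]; subst y'.
  apply: QN.
  have [] : (Q `&` ball_n B 1) (existT _ y c) => //.
  apply: hVW; split; first by apply: le_trans e1; exact: ltW.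
  exists d; split => //.
  by apply: le_lt_trans (ler_normB _ _) _; apply: lt_le_trans e2; exact: ltrD.
Qed.

(* Near (k, f): k' c = k c + (k' - k) c, where k c is controlled by the
   continuity of E_n -> E_M, c |-> k c, and (k' - k) c by a small tube. *)
Lemma Psi_smul :
  cont setT (prod_top (ltop K) (Psi B taus)) (fun p => smul B p.1 p.2) (Psi B taus).
Proof.
move=> Q pQ [k [x a]] [_ Qkf].
have Qp0 : Q (addFP B (existT _ x (k *: a, 0))) by rewrite /addFP /= addr0.
have [A1 [V1 [pA1 pV1 A1a V10 hA]]] := Psi_add_local pQ Qp0.
have [G [r [oG Gx r0 GrV]]] : exists G r, [/\ open G, G x, 0 < r & tube B G r `<=` V1].
  by apply: Psi_zero_tube; exists V1; split.
have [n [n0 hn]] := nat_archimedean_pos harch (nrm_ge0 (existT _ x a)).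
set M := maxn 1 (nceil (`|k| * n%:R)).
have M0 : (0 < M)%N by rewrite leq_max.
case: hM => _ _ _ hs _.
have tD := hs k n n0 _ (pA1 M M0).
set D := ball_n B n `&` smul B k @^-1` (A1 `&` ball_n B M) in tD.
set C := (D `&` [set f | nrm B f < n%:R]) `&` Defs.pi B @^-1` G.
have n0' : 0 < (n%:R : K) by rewrite ltr0n.
have rn0 : 0 < r / n%:R by rewrite divr_gt0.
exists (ball k (r / n%:R)), C; split.
- exact: ball_open.
- by apply: (topologyI Psi_topology); [exact: Psi_open_lt | exact: Psi_pi_preimage].
- by rewrite /= -ball_normE /ball_ /= subrr normr0.
- split => //; split => //; split; first exact: ball_n_lt.
  by split => //; apply: ball_n_smul => //; exact: ball_n_lt.
- move=> [k' [y c]] [/= bk' [[[_ [Ak _]] lc] Gy]]; split => //=.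
  have e : k *: c + (k' - k) *: c = k' *: c by rewrite -scalerDl addrC subrK.
  have := hA (existT _ y (k *: c, (k' - k) *: c)) Ak.
  rewrite /addFP /= e; apply; apply: GrV; split => //.
  rewrite /nrm /= normrZ.
  move: bk'; rewrite -ball_normE /ball_ /= distrC => bk'.
  apply: le_lt_trans (_ : `|k' - k| * `|c| <= `|k' - k| * n%:R) _.
    by apply: ler_wpM2l => //; exact: ltW.
  by rewrite -(ltr_pM2r n0') divfK ?lt0r_neq0 // in bk'.
Qed.

Lemma Psi_banach : BanachBundle B (Psi B taus).
Proof.
split.
- exact: Psi_topology.
- split; last exact: Psi_pi_image.
  by move=> U oU; rewrite setTI; exact: Psi_pi_preimage.
- split; [exact: Psi_smul | exact: Psi_add].
- exact: Psi_nrm_lt.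
- move=> x; split; last exact: Psi_zero_tube.
  move=> U r oU Ux r0; exists (tube B U r); split => //.
  + exact: Psi_tube.
  + by split => //; rewrite nrm_zsec.
Qed.

End PsiBanachBundle.

Lemma Psi_Phi {K : numFieldType} {X : topologicalType} (B : X -> completeNormedModType K)
  (tau : set (set (Tot B))) :
  BanachBundle B tau -> nat_archimedean K -> Psi B (Phi B tau) = tau.
Proof.
move=> hB harch; apply/funext => U; apply/propext; split; last by move=> tU n n0; exists U.
move=> hU; apply: (topology_local (bundle_topology hB)) => // f Uf.
have [n [n0 hn]] := nat_archimedean_pos harch (nrm_ge0 f).
have [Q [tQ eQ]] := hU n n0.
exists (Q `&` [set g | nrm B g < n%:R]); split.
- exact: topologyI (bundle_topology hB) tQ (bundle_nrm_lt hB _).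
- split => //; have : (U `&` ball_n B n) f by split => //; exact: ball_n_lt.
  by rewrite eQ => -[].
- move=> g [Qg lg]; have : (Q `&` ball_n B n) g by split => //; exact: ball_n_lt.
  by rewrite -eQ => -[].
Qed.

Lemma totmap_ball_n {K : numFieldType} {X : topologicalType}
  (B B' : X -> completeNormedModType K) (phi : forall x, B x -> B' x) n
  (Q : set (Tot B')) : fib_lin_contr phi ->
  ball_n B n `&` totmap phi @^-1` (Q `&` ball_n B' n) = totmap phi @^-1` Q `&` ball_n B n.
Proof.
move=> hl; apply/seteqP; split; first by move=> f [bf [Qf _]].
move=> [x a] [Qf bf]; split => //; split => //.
by have [_ _ h] := hl x; apply: le_trans (h a) bf.
Qed.

Lemma BanachMor_ModelMor {K : numFieldType} {X : topologicalType}
  (B B' : X -> completeNormedModType K) tau tau' (phi : forall x, B x -> B' x) :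
  nat_archimedean K -> BanachBundle B tau -> BanachBundle B' tau' ->
  (BanachMor tau tau' phi <-> ModelMor (Phi B tau) (Phi B' tau') phi).
Proof.
move=> harch hB hB'; split.
- move=> [hl hc]; split => // n n0 W [Q [tQ ->]].
  exists (totmap phi @^-1` Q); split; last exact: totmap_ball_n.
  by have := hc Q tQ; rewrite setTI.
- move=> [hl hm]; split => // Q tQ; rewrite setTI -(Psi_Phi hB harch).
  move=> n n0; rewrite -(totmap_ball_n _ _ hl).
  by apply: hm n0 _ _; exists Q.
Qed.

Unset Implicit Arguments.

Theorem mainTheorem14 (R : realType) (iscomplex : bool) (X : topologicalType)
  (hcompact : compact [set: X]) (hhaus : hausdorff_space X) :
  (forall (B : X -> completeNormedModType (scalars R iscomplex)) tau,
      BanachBundle B tau -> ModelBundle B (Phi B tau)) /\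
  (forall (B : X -> completeNormedModType (scalars R iscomplex)) taus,
      ModelBundle B taus -> BanachBundle B (Psi B taus)) /\
  (forall (B : X -> completeNormedModType (scalars R iscomplex)) tau,
      BanachBundle B tau -> Psi B (Phi B tau) = tau) /\
  (forall (B : X -> completeNormedModType (scalars R iscomplex)) taus,
      ModelBundle B taus -> forall n, (0 < n)%N -> Phi B (Psi B taus) n = taus n) /\
  (forall (B B' : X -> completeNormedModType (scalars R iscomplex)) tau tau'
          (phi : forall x, B x -> B' x),
      BanachBundle B tau -> BanachBundle B' tau' ->
      (BanachMor tau tau' phi <-> ModelMor (Phi B tau) (Phi B' tau') phi)).
Proof.
have harch := @scalars_nat_archimedean R iscomplex.
split; first by move=> B tau hB; exact: Phi_model hB harch.
split; first by move=> B taus hM; exact: Psi_banach hM harch.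
split; first by move=> B tau hB; exact: Psi_Phi hB harch.
split; first by move=> B taus hM n n0; exact: (Phi_Psi hM n0).
by move=> B B' tau tau' phi; exact: BanachMor_ModelMor.
Qed.
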